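(* Let $(X,u)$ and $(Y,v)$ be Čech closure spaces, let $Y^X$ be the set of all continuous maps $(X,u)\to(Y,v)$, and let $\{\sigma_\alpha\}$ be a collection of Čech closure operators on $Y^X$. (1) If every $\sigma_\alpha$ is proper, then the infimum $\bigwedge\sigma_\alpha$ and the supremum $\bigvee\sigma_\alpha$ are proper. (2) If every $\sigma_\alpha$ is admissible, then the supremum $\bigvee\sigma_\alpha$ is admissible.
   Context: A Čech closure space $(X,u)$ is a set $X$ with an operator $u:\mathcal P(X)\to\mathcal P(X)$ satisfying $u(\emptyset)=\emptyset$, $A\subset u(A)$, and $u(A\cup B)=u(A)\cup u(B)$. The interior is $\mathrm{int}_u A=X\setminus u(X\setminus A)$; $U$ is a neighbourhood of $x$ if $x\in\mathrm{int}_uU$; $\mathcal N_\alpha(f)$ denotes the neighbourhood system of $f$ for $\sigma_\alpha$. A closure operator is determined by neighbourhood bases (families at each point that are nonempty, contain the point, and are downward directed) or subbases (nonempty families of sets containing the point, whose finite intersections form a base), via $u(A)=\{x:$ every basic neighbourhood of $x$ meets $A\}$. The infimum $\bigwedge\sigma_\alpha$ is the closure operator on $Y^X$ for which $\bigcap_\alpha\mathcal N_\alpha(f)$ is a neighbourhood base at each $f$; the supremum $\bigvee\sigma_\alpha$ is the closure operator for which $\bigcup_\alpha\mathcal N_\alpha(f)$ is a neighbourhood subbase at each $f$. A map $f:(X,u)\to(Y,v)$ is continuous if $f(u(A))\subset v(f(A))$ for all $A$. The product $(Z,w)\times(X,u)$ is $Z\times X$ with the closure operator for which the sets $W\times U$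 ($W$ a neighbourhood of $z$, $U$ of $x$) form a neighbourhood base at $(z,x)$. For $g:Z\times X\to Y$, $g^*(z)(x)=g(z,x)$. A closure operator $\sigma$ on $Y^X$ is proper if for every closure space $(Z,w)$, continuity of $g:(Z,w)\times(X,u)\to(Y,v)$ implies continuity of $g^*:(Z,w)\to(Y^X,\sigma)$; it is admissible if for every closure space $(Z,w)$ and every $g:Z\times X\to Y$ with $g^*(Z)\subset Y^X$, continuity of $g^*:(Z,w)\to(Y^X,\sigma)$ implies continuity of $g$. *)

From mathcomp Require Import all_boot.
From mathcomp Require Export classical_sets boolp.

Set Implicit Arguments.
Unset Strict Implicit.
Unset Printing Implicit Defensive.

Local Open Scope classical_set_scope.

Definition closure_op (T : Type) (u : set T -> set T) : Prop :=
  [/\ u set0 = set0,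
      (forall A, A `<=` u A) &
      (forall A B, u (A `|` B) = u A `|` u B)].

Definition cinterior (T : Type) (u : set T -> set T) (A : set T) : set T :=
  ~` u (~` A).

Definition cnbhd (T : Type) (u : set T -> set T) (x : T) (U : set T) : Prop :=
  cinterior u U x.

Definition ccontinuous (X Y : Type) (u : set X -> set X) (v : set Y -> set Y)
  (f : X -> Y) : Prop :=
  forall A : set X, f @` (u A) `<=` v (f @` A).

Definition cmap (X Y : Type) (u : set X -> set X) (v : set Y -> set Y) : Type :=
  {f : X -> Y | ccontinuous u v f}.

(* product closure: the sets W × U (W nbhd of z, U nbhd of x) form a base at (z,x) *)
Definition prod_closure (Z X : Type) (w : set Z -> set Z) (u : set X -> set X)
  (A : set (Z * X)) : set (Z * X) :=
  [set p | forall (W : set Z) (U : set X), cnbhd w p.1 W -> cnbhd u p.2 U ->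
     (A `&` [set q | W q.1 /\ U q.2]) !=set0].

(* infimum: ⋂_α N_α(f) is a neighbourhood base at f *)
Definition inf_closure (C I : Type) (F : I -> set C -> set C) (A : set C) : set C :=
  [set f | forall U : set C, (forall i, cnbhd (F i) f U) -> (U `&` A) !=set0].

(* supremum: ⋃_α N_α(f) is a neighbourhood subbase at f
   (basic neighbourhoods = finite intersections of subbasic ones) *)
Definition sup_closure (C I : Type) (F : I -> set C -> set C) (A : set C) : set C :=
  [set f | forall (n : nat) (idx : 'I_n -> I) (Us : 'I_n -> set C),
     (forall k, cnbhd (F (idx k)) f (Us k)) ->
     ([set g | forall k, Us k g] `&` A) !=set0].

(* proper closure operator on Y^X; gs plays the role of g^* *)
Definition proper_cl (X Y : Type) (u : set X -> set X) (v : set Y -> set Y)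
  (sigma : set (cmap u v) -> set (cmap u v)) : Prop :=
  forall (Z : Type) (w : set Z -> set Z), closure_op w ->
  forall (g : Z * X -> Y) (gs : Z -> cmap u v),
    (forall z x, proj1_sig (gs z) x = g (z, x)) ->
    ccontinuous (prod_closure w u) v g -> ccontinuous w sigma gs.

Definition admissible_cl (X Y : Type) (u : set X -> set X) (v : set Y -> set Y)
  (sigma : set (cmap u v) -> set (cmap u v)) : Prop :=
  forall (Z : Type) (w : set Z -> set Z), closure_op w ->
  forall (g : Z * X -> Y) (gs : Z -> cmap u v),
    (forall z x, proj1_sig (gs z) x = g (z, x)) ->
    ccontinuous w sigma gs -> ccontinuous (prod_closure w u) v g.

From mathcomp Require Import all_boot classical_sets boolp.

(* The infimum has larger closures (is coarser) and the supremum smaller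
   closures (is finer) than every sigma_i.  Properness is inherited by coarser
   operators and admissibility by finer ones, which settles everything but the
   properness of the supremum.  There, g^* is continuous into every sigma_i, so
   the preimage of a subbasic neighbourhood is a neighbourhood, and a finite
   intersection of neighbourhoods is again one by finite additivity of w. *)

Set Implicit Arguments.
Unset Strict Implicit.
Unset Printing Implicit Defensive.

Local Open Scope classical_set_scope.

Section ClosureNeighbourhoods.
Variables (T : Type) (w : set T -> set T).
Hypothesis hw : closure_op w.

Lemma closure_op_le (A B : set T) : A `<=` B -> w A `<=` w B.
Proof. by case: hw => _ _ wU /setUidPr <-; rewrite wU => x wAx; left. Qed.

Lemma cnbhdT (z : T) : cnbhd w z setT.
Proof. by rewrite /cnbhd /cinterior setCT; case: hw => -> _ _ []. Qed.

Lemma cnbhdI (z : T) (U V : set T) :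
  cnbhd w z U -> cnbhd w z V -> cnbhd w z (U `&` V).
Proof. by rewrite /cnbhd /cinterior setCI; case: hw => _ _ -> nU nV []. Qed.

Lemma cnbhd_bigsetI (z : T) (J : Type) (s : seq J) (U : J -> set T) :
  (forall j, cnbhd w z (U j)) -> cnbhd w z (\big[setI/setT]_(j <- s) U j).
Proof. by move=> nU; apply: big_ind => //; [exact: cnbhdT | exact: cnbhdI]. Qed.

Lemma cnbhd_meets (z : T) (A U : set T) :
  w A z -> cnbhd w z U -> U `&` A !=set0.
Proof.
move=> wAz nU; apply: contrapT => UA0; apply: nU.
by apply: (closure_op_le _ wAz) => a Aa Ua; apply: UA0; exists a.
Qed.

End ClosureNeighbourhoods.

Lemma cnbhd_ccontinuous (Z T : Type) (w : set Z -> set Z) (v : set T -> set T)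
    (h : Z -> T) (z : Z) (U : set T) :
  closure_op v -> ccontinuous w v h -> cnbhd v (h z) U ->
  cnbhd w z (h @^-1` U).
Proof.
move=> hv hc nU wz; apply: nU.
by apply: (closure_op_le hv _ (hc _ _ (ex_intro2 _ _ z wz erefl))) => _ [y nUy <-].
Qed.

Lemma sub_ccontinuous (Z T : Type) (w : set Z -> set Z) (v v' : set T -> set T)
    (h : Z -> T) :
  (forall A, v A `<=` v' A) -> ccontinuous w v h -> ccontinuous w v' h.
Proof. by move=> vv' hc A; apply: subset_trans (hc A) (vv' _). Qed.

Section InfSupClosure.
Variables (C I : Type) (F : I -> set C -> set C).

Lemma inf_closure_ge (i : I) :
  closure_op (F i) -> forall A, F i A `<=` inf_closure F A.
Proof. by move=> hFi A f Fif U nU; exact: (cnbhd_meets hFi Fif (nU i)). Qed.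

Lemma sup_closure_le (i : I) : forall A, sup_closure F A `<=` F i A.
Proof.
move=> A f supf; apply: contrapT => nFi.
have nA : cnbhd (F i) f (~` A) by rewrite /cnbhd /cinterior setCK.
by have [g [/(_ ord0) + Ag]] := supf 1 (fun=> i) (fun=> ~` A) (fun=> nA).
Qed.

Lemma ccontinuous_sup_closure (Z : Type) (w : set Z -> set Z) (h : Z -> C) :
  closure_op w -> (forall i, closure_op (F i)) ->
  (forall i, ccontinuous w (F i) h) -> ccontinuous w (sup_closure F) h.
Proof.
move=> hw hF hc A _ [z wAz <-] n idx Us nUs.
have nbhd : cnbhd w z (\big[setI/setT]_(k < n) h @^-1` Us k).
  by apply: (cnbhd_bigsetI hw) => k; exact: cnbhd_ccontinuous (hF _) (hc _) (nUs k).
have [a [Ua Aa]] := cnbhd_meets hw wAz nbhd.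
exists (h a); split; last by exists a.
by move=> k; move: Ua; rewrite (bigD1 k) //= => -[].
Qed.

End InfSupClosure.

Section ProperAdmissible.
Variables (X Y : Type) (u : set X -> set X) (v : set Y -> set Y).
Implicit Types sigma tau : set (cmap u v) -> set (cmap u v).

Lemma proper_cl_le sigma tau :
  (forall A, sigma A `<=` tau A) -> proper_cl sigma -> proper_cl tau.
Proof.
by move=> st hs Z w hw g gs hgs hg; apply: sub_ccontinuous st (hs Z w hw g gs hgs hg).
Qed.

Lemma admissible_cl_le sigma tau :
  (forall A, sigma A `<=` tau A) -> admissible_cl tau -> admissible_cl sigma.
Proof.
move=> st ht Z w hw g gs hgs hc.
by apply: (ht Z w hw g gs hgs); apply: sub_ccontinuous st hc.
Qed.

Lemma proper_cl_sup_closure (I : Type) (F : I -> set (cmap u v) -> set (cmap u v)) :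
  (forall i, closure_op (F i)) -> (forall i, proper_cl (F i)) ->
  proper_cl (sup_closure F).
Proof.
move=> hF hP Z w hw g gs hgs hg.
by apply: (ccontinuous_sup_closure hw hF) => i; exact: hP i Z w hw g gs hgs hg.
Qed.

End ProperAdmissible.

Theorem corollary2 (X Y : Type) (u : set X -> set X) (v : set Y -> set Y)
  (hu : closure_op u) (hv : closure_op v)
  (I : Type) (hI : inhabited I) (F : I -> set (cmap u v) -> set (cmap u v))
  (hF : forall i, closure_op (F i)) :
  ((forall i, proper_cl (F i)) ->
     proper_cl (inf_closure F) /\ proper_cl (sup_closure F)) /\
  ((forall i, admissible_cl (F i)) -> admissible_cl (sup_closure F)).
Proof.
case: hI => i0; split.
  move=> hP; split; last exact: proper_cl_sup_closure.
  exact: proper_cl_le (inf_closure_ge (hF i0)) (hP i0).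
by move=> hA; apply: admissible_cl_le (sup_closure_le i0) (hA i0).
Qed.
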